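(* Under the setting and recursive definitions of $\mu^*_l$ and $\sigma^{*2}_l$ below, for every $l=1,\dots,L$ and every $i=1,\dots,n_l$, $$\mu^*_l(\mathbf x^{[l]}_i)=y^{[l]}_i\quad\text{and}\quad\sigma^{*2}_l(\mathbf x^{[l]}_i)=0.$$
   Context: Fix $L\ge2$, $d\ge1$. For $l=1,\dots,L$ let $\mathcal X_l=\{\mathbf x^{[l]}_1,\dots,\mathbf x^{[l]}_{n_l}\}\subset\mathbb R^d$ be nested designs with distinct points, $\mathcal X_L\subseteq\cdots\subseteq\mathcal X_1$, with $\mathbf x^{[l]}_i=\mathbf x^{[l-1]}_i$ for $i\le n_l$, and let $\mathbf y_l=(y^{[l]}_1,\dots,y^{[l]}_{n_l})^T$ be observed outputs. Parameters: $\alpha_l\in\mathbb R$, $\tau_l^2>0$, $\theta_{lj}>0$, $\theta_{ly}>0$. Kernels: $K_1(\mathbf x,\mathbf x')=\prod_{j=1}^d\exp(-(x_j-x_j')^2/\theta_{1j})$; for $l\ge2$, $K_l((\mathbf x,y),(\mathbf x',y'))=\exp(-(y-y')^2/\theta_{ly})\prod_{j=1}^d\exp(-(x_j-x_j')^2/\theta_{lj})$. Matrices $\mathbf K_1=(K_1(\mathbf x^{[1]}_i,\mathbf x^{[1]}_k))$, $\mathbf K_l=(K_l((\mathbf x^{[l]}_i,y^{[l-1]}_i),(\mathbf x^{[l]}_k,y^{[l-1]}_k)))$ ($l\ge2$), assumed invertible; $r_i=(\mathbf K_l^{-1}(\mathbf y_l-\alpha_l\mathbf 1_{n_l}))_i$.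 Define $\mu_1^*(\mathbf x)=\alpha_1+\mathbf k_1(\mathbf x)^T\mathbf K_1^{-1}(\mathbf y_1-\alpha_1\mathbf 1_{n_1})$, $\sigma_1^{*2}(\mathbf x)=\tau_1^2(1-\mathbf k_1(\mathbf x)^T\mathbf K_1^{-1}\mathbf k_1(\mathbf x))$ with $(\mathbf k_1(\mathbf x))_i=K_1(\mathbf x,\mathbf x^{[1]}_i)$, and for $l\ge2$ recursively $\mu^*_l(\mathbf x)=\alpha_l+\sum_{i=1}^{n_l}r_i\prod_{j}\exp(-(x_j-x^{[l]}_{ij})^2/\theta_{lj})\,(1+2\sigma^{*2}_{l-1}(\mathbf x)/\theta_{ly})^{-1/2}\exp(-(y^{[l-1]}_i-\mu^*_{l-1}(\mathbf x))^2/(\theta_{ly}+2\sigma^{*2}_{l-1}(\mathbf x)))$, $\sigma^{*2}_l(\mathbf x)=\tau_l^2-(\mu^*_l(\mathbf x)-\alpha_l)^2+\sum_{i,k=1}^{n_l}\zeta_{ik}(r_ir_k-\tau_l^2(\mathbf K_l^{-1})_{ik})\prod_j\exp(-((x_j-x^{[l]}_{ij})^2+(x_j-x^{[l]}_{kj})^2)/\theta_{lj})$, with $\zeta_{ik}=(1+4\sigma^{*2}_{l-1}(\mathbf x)/\theta_{ly})^{-1/2}\exp\big(-(\tfrac{y^{[l-1]}_i+y^{[l-1]}_k}{2}-\mu^*_{l-1}(\mathbf x))^2/(\theta_{ly}/2+2\sigma^{*2}_{l-1}(\mathbf x))-(y^{[l-1]}_i-y^{[l-1]}_k)^2/(2\theta_{ly})\big)$.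 Here $x^{[l]}_{ij}$ is the $j$-th coordinate of $\mathbf x^{[l]}_i$. *)

From HB Require Import structures.
From mathcomp Require Import all_boot all_order all_algebra.
From mathcomp Require Import reals.
From mathcomp Require Import sequences exp.
Set Implicit Arguments. Unset Strict Implicit. Unset Printing Implicit Defensive.
Import Order.TTheory GRing.Theory Num.Theory.
Local Open Scope ring_scope.

(* Data of the recursive multi-fidelity GP.  Levels are l = 1..L (natural
   numbers, level 0 unused); points within a level are 0-based:
   xd l i = x^{[l]}_{i+1}, yd l i = y^{[l]}_{i+1}, for i < nd l. *)
Record mfdata (R : realType) (d : nat) := MFData {
  nd : nat -> nat;
  xd : nat -> nat -> 'rV[R]_d;
  yd : nat -> nat -> R;
  alpha : nat -> R;
  tau2 : nat -> R;
  theta : nat -> 'I_d -> R;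
  thetay : nat -> R
}.

Section Defs.
Variables (R : realType) (d : nat) (D : mfdata R d).

Definition sqexp (l : nat) (x x' : 'rV[R]_d) : R :=
  \prod_(j < d) expR (- (x ord0 j - x' ord0 j) ^+ 2 / theta D l j).

Definition Kmx (l : nat) : 'M[R]_(nd D l) :=
  \matrix_(i, k)
    (if l == 1%N then sqexp l (xd D l i) (xd D l k)
     else expR (- (yd D l.-1 i - yd D l.-1 k) ^+ 2 / thetay D l)
          * sqexp l (xd D l i) (xd D l k)).

Definition yvec (l : nat) : 'cV[R]_(nd D l) := \col_i yd D l i.

Definition rvec (l : nat) : 'cV[R]_(nd D l) :=
  invmx (Kmx l) *m (yvec l - const_mx (alpha D l)).

Definition k1vec (x : 'rV[R]_d) : 'cV[R]_(nd D 1) :=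
  \col_i sqexp 1 x (xd D 1 i).

Definition mu1 (x : 'rV[R]_d) : R :=
  alpha D 1 + ((k1vec x)^T *m rvec 1) ord0 ord0.

Definition sig1 (x : 'rV[R]_d) : R :=
  tau2 D 1 * (1 - ((k1vec x)^T *m invmx (Kmx 1) *m k1vec x) ord0 ord0).

(* level l >= 2, given mu*_{l-1} = mp and sigma*^2_{l-1} = sp *)
Definition mu_step (l : nat) (mp sp : 'rV[R]_d -> R) (x : 'rV[R]_d) : R :=
  alpha D l + \sum_(i < nd D l)
    rvec l i ord0 * sqexp l x (xd D l i)
    * (Num.sqrt (1 + 2 * sp x / thetay D l))^-1
    * expR (- (yd D l.-1 i - mp x) ^+ 2 / (thetay D l + 2 * sp x)).

Definition zeta (l : nat) (mp sp : 'rV[R]_d -> R) (x : 'rV[R]_d)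
    (i k : nat) : R :=
  (Num.sqrt (1 + 4 * sp x / thetay D l))^-1
  * expR (- ((yd D l.-1 i + yd D l.-1 k) / 2 - mp x) ^+ 2
             / (thetay D l / 2 + 2 * sp x)
          - (yd D l.-1 i - yd D l.-1 k) ^+ 2 / (2 * thetay D l)).

Definition sig_step (l : nat) (mp sp : 'rV[R]_d -> R) (x : 'rV[R]_d) : R :=
  tau2 D l - (mu_step l mp sp x - alpha D l) ^+ 2
  + \sum_(i < nd D l) \sum_(k < nd D l)
      zeta l mp sp x i k
      * (rvec l i ord0 * rvec l k ord0 - tau2 D l * invmx (Kmx l) i k)
      * \prod_(j < d) expR (- ((x ord0 j - xd D l i ord0 j) ^+ 2
                               + (x ord0 j - xd D l k ord0 j) ^+ 2)
                             / theta D l j).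

(* musig m = (mu*_{m+1}, sigma*^2_{m+1}) *)
Fixpoint musig (m : nat) : ('rV[R]_d -> R) * ('rV[R]_d -> R) :=
  match m with
  | 0 => (mu1, sig1)
  | m'.+1 => let p := musig m' in
             (mu_step m'.+2 p.1 p.2, sig_step m'.+2 p.1 p.2)
  end.

Definition mustar (l : nat) : 'rV[R]_d -> R := (musig l.-1).1.
Definition sigstar2 (l : nat) : 'rV[R]_d -> R := (musig l.-1).2.

End Defs.

(* - Kernel algebra (any commutative unit ring): if w is the i-th row of an
     invertible matrix K and r = K^{-1}(y - a 1), then a + w.r = y_i, and
     w^T K^{-1} w = K_ii.  With K_ii = 1 this forces the variance formula
     t - (w.r)^2 + sum_jk w_j w_k (r_j r_k - t K^{-1}_jk) to vanish.
   - Gaussian kernels: at a design point with mu*_{l-1} = y^{[l-1]}_i and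
     sigma*^2_{l-1} = 0, the weights appearing in mu*_l and sigma*^2_l
     degenerate exactly into the entries K_l(i,k) and K_l(i,j) K_l(i,k).

   Level 1 is then a direct instance of the kernel algebra, each level l >= 2
   follows from the previous one through the Gaussian degeneration, and the
   theorem is an induction on the level. *)
From HB Require Import structures.
From mathcomp Require Import all_boot all_order all_algebra.
From mathcomp Require Import reals.
From mathcomp Require Import sequences exp.
From mathcomp Require Import ring.
Set Implicit Arguments. Unset Strict Implicit. Unset Printing Implicit Defensive.
Import Order.TTheory GRing.Theory Num.Theory.
Local Open Scope ring_scope.

Section KernelAlgebra.
Variables (R : comUnitRingType) (n : nat) (K : 'M[R]_n).
Hypothesis K_unit : K \in unitmx.

Lemma row_mul_invmx (v : 'cV[R]_n) i :
  \sum_k K i k * (invmx K *m v) k ord0 = v i ord0.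
Proof.
transitivity ((K *m (invmx K *m v)) i ord0); first by rewrite mxE.
by rewrite mulmxA mulmxV // mul1mx.
Qed.

Lemma row_quad_invmx i :
  \sum_j \sum_k K i j * K i k * invmx K j k = K i i.
Proof.
rewrite exchange_big /=.
transitivity (\sum_k (K *m invmx K) i k * K i k).
  apply: eq_bigr => k _; rewrite mxE big_distrl /=.
  by apply: eq_bigr => j _; rewrite mulrAC.
rewrite mulmxV // (bigD1 i) //= big1 => [|k /negPf ki].
  by rewrite mxE eqxx mul1r addr0.
by rewrite mxE eq_sym ki mul0r.
Qed.

Definition kriging_weights (y : 'cV[R]_n) (a : R) : 'cV[R]_n :=
  invmx K *m (y - const_mx a).

Lemma kriging_mean_interp (y : 'cV[R]_n) a i :
  a + \sum_k K i k * kriging_weights y a k ord0 = y i ord0.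
Proof. by rewrite row_mul_invmx !mxE addrCA subrr addr0. Qed.

Lemma kriging_var_interp (y : 'cV[R]_n) a t i : K i i = 1 ->
  let r := kriging_weights y a in
  t - (\sum_k K i k * r k ord0) ^+ 2
  + \sum_j \sum_k K i j * K i k * (r j ord0 * r k ord0 - t * invmx K j k)
  = 0.
Proof.
move=> Kii1 r.
have split_sum : \sum_j \sum_k K i j * K i k * (r j ord0 * r k ord0 - t * invmx K j k)
    = (\sum_k K i k * r k ord0) ^+ 2 - t * \sum_j \sum_k K i j * K i k * invmx K j k.
  rewrite expr2 big_distrl /= mulr_sumr -sumrB; apply: eq_bigr => j _.
  rewrite big_distrr /= mulr_sumr -sumrB; apply: eq_bigr => k _; ring.
by rewrite split_sum row_quad_invmx Kii1; ring.
Qed.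

End KernelAlgebra.

Section GaussianKernels.
Variables (R : realType) (d : nat) (D : mfdata R d).

Definition ykern (l : nat) (a b : R) : R := expR (- (a - b) ^+ 2 / thetay D l).

(* Symmetry, matching the orientation of (y_k - mu)^2 in mu*_l with K_l. *)
Lemma ykernC l a b : ykern l a b = ykern l b a.
Proof. by rewrite /ykern -sqrrN opprB. Qed.

Lemma ykern_refl l a : ykern l a a = 1.
Proof. by rewrite /ykern subrr expr2 mulr0 oppr0 mul0r expR0. Qed.

Lemma sqexp_refl l x : sqexp D l x x = 1.
Proof.
by rewrite /sqexp big1 // => j _; rewrite subrr expr2 mul0r oppr0 mul0r expR0.
Qed.

Lemma sqexp_prod2 l (x y z : 'rV[R]_d) :
  \prod_(j < d) expR (- ((x ord0 j - y ord0 j) ^+ 2 + (x ord0 j - z ord0 j) ^+ 2)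
                      / theta D l j)
  = sqexp D l x y * sqexp D l x z.
Proof.
rewrite /sqexp -big_split /=; apply: eq_bigr => j _.
by rewrite -expRD opprD mulrDl.
Qed.

Lemma Kmx1E i k : Kmx D 1 i k = sqexp D 1 (xd D 1 i) (xd D 1 k).
Proof. by rewrite mxE. Qed.

Lemma KmxE l i k : l != 1%N ->
  Kmx D l i k = ykern l (yd D l.-1 i) (yd D l.-1 k) * sqexp D l (xd D l i) (xd D l k).
Proof. by move=> /negPf l1; rewrite mxE l1. Qed.

Lemma zeta_zero_var l mp sp x i k c :
  thetay D l != 0 -> mp x = c -> sp x = 0 ->
  zeta D l mp sp x i k = ykern l c (yd D l.-1 i) * ykern l c (yd D l.-1 k).
Proof.
move=> th0 mpE spE; rewrite /zeta /ykern mpE spE !mulr0 mul0r addr0 sqrtr1 invr1 mul1r.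
by rewrite -expRD; congr expR; field.
Qed.

End GaussianKernels.

Section Interpolation.
Variables (R : realType) (d : nat) (D : mfdata R d).

Lemma design_mean_interp l (i : 'I_(nd D l)) : Kmx D l \in unitmx ->
  alpha D l + \sum_k Kmx D l i k * rvec D l k ord0 = yd D l i.
Proof. by move=> K_unit; rewrite (kriging_mean_interp K_unit) mxE. Qed.

Lemma design_var_interp l (i : 'I_(nd D l)) : Kmx D l \in unitmx ->
  Kmx D l i i = 1 ->
  tau2 D l - (yd D l i - alpha D l) ^+ 2
  + \sum_j \sum_k Kmx D l i j * Kmx D l i k
      * (rvec D l j ord0 * rvec D l k ord0 - tau2 D l * invmx (Kmx D l) j k)
  = 0.
Proof.
move=> K_unit Kii1.
rewrite -(design_mean_interp i K_unit) [alpha D l + _]addrC addrK.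
exact: kriging_var_interp.
Qed.

Lemma level1_interp i : (i < nd D 1)%N -> Kmx D 1 \in unitmx ->
  mu1 D (xd D 1 i) = yd D 1 i /\ sig1 D (xd D 1 i) = 0.
Proof.
move=> lti K_unit; set io := Ordinal lti.
have k1E k : k1vec D (xd D 1 io) k ord0 = Kmx D 1 io k by rewrite /k1vec mxE Kmx1E.
split.
  rewrite /mu1 mxE.
  under eq_bigr => k _ do rewrite [(_^T) _ _]mxE k1E.
  exact: design_mean_interp.
rewrite /sig1 mxE.
under eq_bigr => k _ do rewrite [(_ *m _) _ _]mxE big_distrl /=.
rewrite exchange_big /=.
under eq_bigr => j _ do under eq_bigr => k _ do
  rewrite [(_^T) _ _]mxE !k1E mulrAC.
by rewrite row_quad_invmx // Kmx1E sqexp_refl subrr mulr0.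
Qed.

Lemma level_step_interp l mp sp i : l != 1%N -> (i < nd D l)%N ->
  Kmx D l \in unitmx -> thetay D l != 0 ->
  mp (xd D l i) = yd D l.-1 i -> sp (xd D l i) = 0 ->
  mu_step D l mp sp (xd D l i) = yd D l i /\ sig_step D l mp sp (xd D l i) = 0.
Proof.
move=> l1 lti K_unit th0 mpE spE; set io := Ordinal lti.
have Kio k : Kmx D l io k = ykern D l (yd D l.-1 i) (yd D l.-1 k)
                            * sqexp D l (xd D l i) (xd D l k) by rewrite KmxE.
have muE : mu_step D l mp sp (xd D l i) = yd D l i.
  rewrite /mu_step mpE spE -(design_mean_interp io K_unit); congr (_ + _).
  apply: eq_bigr => k _.
  rewrite !mulr0 mul0r !addr0 sqrtr1 invr1 mulr1 -/(ykern D l _ _) ykernC Kio.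
  ring.
split=> //.
have Kii1 : Kmx D l io io = 1 by rewrite Kio ykern_refl sqexp_refl mulr1.
rewrite /sig_step muE -[RHS](design_var_interp K_unit Kii1).
congr (_ + _); apply: eq_bigr => j _; apply: eq_bigr => k _.
rewrite sqexp_prod2 (zeta_zero_var _ _ th0 mpE spE) !Kio; ring.
Qed.

End Interpolation.

Theorem proposition3p2 (R : realType) (d L : nat) (D : mfdata R d) :
  (2 <= L)%N -> (1 <= d)%N ->
  (forall l, (2 <= l <= L)%N -> (nd D l <= nd D l.-1)%N) ->
  (forall l i, (2 <= l <= L)%N -> (i < nd D l)%N -> xd D l i = xd D l.-1 i) ->
  (forall l i k, (1 <= l <= L)%N -> (i < nd D l)%N -> (k < nd D l)%N ->
     xd D l i = xd D l k -> i = k) ->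
  (forall l, (1 <= l <= L)%N -> 0 < tau2 D l) ->
  (forall l j, (1 <= l <= L)%N -> 0 < theta D l j) ->
  (forall l, (2 <= l <= L)%N -> 0 < thetay D l) ->
  (forall l, (1 <= l <= L)%N -> Kmx D l \in unitmx) ->
  forall l, (1 <= l <= L)%N -> forall i, (i < nd D l)%N ->
    mustar D l (xd D l i) = yd D l i /\ sigstar2 D l (xd D l i) = 0.
Proof.
move=> _ _ nested prefix _ _ _ thetay_pos K_unit.
suff interp m : (m.+1 <= L)%N -> forall i, (i < nd D m.+1)%N ->
    (musig D m).1 (xd D m.+1 i) = yd D m.+1 i /\ (musig D m).2 (xd D m.+1 i) = 0.
  by move=> [|l] // /andP[_ lL] i lti; exact: interp.
elim: m => [|m IH] mL i lti; first exact: (level1_interp lti (K_unit 1%N mL)).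
have lvl : (2 <= m.+2 <= L)%N by rewrite mL.
have [mpE spE] := IH (ltnW mL) i (leq_trans lti (nested _ lvl)).
rewrite -(prefix _ _ lvl lti) in mpE spE.
apply: level_step_interp => //.
  by apply: K_unit; rewrite mL.
by rewrite gt_eqF // (thetay_pos _ lvl).
Qed.
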